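(* Let $\varphi\in\mathbb{T}=\mathbb{R}/\mathbb{Z}$ be badly approximable and let $P\subseteq\mathbb{T}$ be an arc of length at least $\frac12$. For $x_0\in\mathbb{T}$ and each $k\in\mathbb{N}$ define the sequence $(x_i^k)_{i\ge0}$ by $x_0^k=x_0$ and $x_{i+1}^k=x_i^k+k\varphi$ (mod $1$). Then there exist $r>0$ and $d\in\mathbb{N}$, independent of $x_0$, such that $$\left|\{x_i^k : i\in\{1,2,\dots,dk\},\ x_i^k\in P\}\right|\ \ge\ rk$$ for all sufficiently large $k$.
   Context: A real number $\varphi$ is badly approximable if there exists $c>0$ such that $\left|\varphi-\frac pq\right|>\frac{c}{q^2}$ for all rationals $\frac pq$ (with $q\ge1$). The circle $\mathbb{T}$ is identified with $\mathbb{R}/\mathbb{Z}$. *)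

(* the circle T = R/Z, points represented by reals, reduced mod 1 via frac_part. *)
From Stdlib Require Import Reals Lra Lia List.
Open Scope R_scope.

Definition mod1 (x : R) : R := frac_part x.

Definition badly_approximable (phi : R) : Prop :=
  exists c : R, 0 < c /\
    forall (p : Z) (q : nat), (1 <= q)%nat ->
      Rabs (phi - IZR p / INR q) > c / (INR q ^ 2).

(* P (a subset of T, given as a predicate on representatives in [0,1)) is an
   arc of length L: it contains the open arc (a, a+L) and is contained in the
   closed arc [a, a+L] (mod 1); this covers open, closed and half-open arcs. *)
Definition is_arc (P : R -> Prop) (L : R) : Prop :=
  0 < L <= 1 /\
  exists a : R,
    (forall x, 0 < mod1 (x - a) < L -> P (mod1 x)) /\
    (forall x, P (mod1 x) -> mod1 (x - a) <= L).

Fixpoint orbit (x0 phi : R) (k : nat) (i : nat) : R :=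
  match i with
  | O => mod1 x0
  | S i' => mod1 (orbit x0 phi k i' + INR k * phi)
  end.

From Stdlib Require Import Reals Lra Lia List ZArith FinFun Classical.
Open Scope R_scope.

(* Let g = k phi.  Bad approximability gives |g - n| > c/k for every integer n,
   so some multiple h g with h <= max(1, k/(4c)) lies at distance in [1/8, 1/2)
   from the integers.  Six consecutive steps of that length cannot all avoid a
   half circle (a, a + 1/2) contained in P.  Hence, for each residue o < h and
   each block b <= k/h, one of the indices 1 + o + h (6 b + j), j < 6, gives an
   orbit point in P: more than k indices, all at most 6 (k + h) <= d k.  The
   points are distinct because phi is irrational. *)

Lemma frac_part_shift (x : R) (m : Z) : frac_part (x + IZR m) = frac_part x.
Proof.
  symmetry; apply (Int_part_frac_part_spec _ (Int_part x + m)).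
  - destruct (base_fp x); lra.
  - rewrite plus_IZR, (Rplus_Int_part_frac_part x) at 1; ring.
Qed.

Lemma frac_part_plus_frac (a b : R) : frac_part (frac_part a + b) = frac_part (a + b).
Proof.
  replace (frac_part a + b) with (a + b + IZR (- Int_part a))
    by (unfold frac_part; rewrite opp_IZR; ring).
  apply frac_part_shift.
Qed.

Lemma frac_part_eq_diff_integer (u v : R) :
  frac_part u = frac_part v -> exists z : Z, u - v = IZR z.
Proof.
  unfold frac_part; intros E; exists (Int_part u - Int_part v)%Z.
  rewrite minus_IZR; lra.
Qed.

Lemma not_frac_part_lower_half (w : R) :
  ~ (0 < frac_part w < 1/2) -> exists m : Z, IZR m + 1/2 <= w <= IZR m + 1.
Proof.
  intros H; destruct (base_fp w) as [F0 F1].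
  pose proof (Rplus_Int_part_frac_part w) as E.
  destruct (Req_dec (frac_part w) 0) as [Z0|Z0].
  - exists (Int_part w - 1)%Z; rewrite minus_IZR; lra.
  - exists (Int_part w); lra.
Qed.

Lemma upper_half_window_unique (w s : R) (m m' : Z) : Rabs s < 1/2 ->
  IZR m + 1/2 <= w <= IZR m + 1 -> IZR m' + 1/2 <= w + s <= IZR m' + 1 -> m = m'.
Proof.
  intros Hs%Rabs_def2 H1 H2.
  assert (A1 : (m' < m + 1)%Z) by (apply lt_IZR; rewrite plus_IZR; lra).
  assert (A2 : (m < m' + 1)%Z) by (apply lt_IZR; rewrite plus_IZR; lra).
  lia.
Qed.

(* Points outside the lower half circle lie in windows [[m + 1/2, m + 1]].  A
   step shorter than 1/2 cannot pass from one window to another, and five steps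
   of length at least 1/8 cannot stay inside one. *)
Lemma lower_half_within_six_steps (z s : R) (n : Z) : 1/8 <= Rabs s < 1/2 ->
  exists j : nat, (j < 6)%nat /\ 0 < frac_part (z + INR j * (IZR n + s)) < 1/2.
Proof.
  intros Hs; apply NNPP; intros Hnone.
  assert (Hwin : forall j, (j < 6)%nat ->
            exists m : Z, IZR m + 1/2 <= z + INR j * s <= IZR m + 1).
  { intros j Hj; apply not_frac_part_lower_half; intros Hj'.
    apply Hnone; exists j; split; [exact Hj|].
    replace (z + INR j * (IZR n + s)) with (z + INR j * s + IZR (Z.of_nat j * n))
      by (rewrite mult_IZR, <- INR_IZR_INZ; ring).
    now rewrite frac_part_shift. }
  destruct (Hwin 0%nat ltac:(lia)) as [m H0].
  assert (Hstay : forall j, (j <= 5)%nat -> IZR m + 1/2 <= z + INR j * s <= IZR m + 1).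
  { induction j as [|j IH]; intros Hj; [exact H0|].
    destruct (Hwin (S j) ltac:(lia)) as [m' Hm'].
    rewrite S_INR in Hm' |- *.
    replace (z + (INR j + 1) * s) with (z + INR j * s + s) in Hm' |- * by ring.
    rewrite (upper_half_window_unique (z + INR j * s) s m m'); [exact Hm'|lra|apply IH; lia|exact Hm']. }
  specialize (Hstay 5%nat ltac:(lia)); simpl in H0, Hstay.
  unfold Rabs in Hs; destruct (Rcase_abs s); lra.
Qed.

Lemma nearest_integer (g : R) : exists n : Z, Rabs (g - IZR n) <= 1/2.
Proof.
  exists (Int_part (g + 1/2)); destruct (base_Int_part (g + 1/2)).
  apply Rabs_le; lra.
Qed.

Lemma nat_floor (y : R) : 0 <= y -> exists h : nat, INR h <= y < INR h + 1.
Proof.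
  intros Hy; destruct (base_Int_part y) as [B1 B2].
  assert (Hn : (-1 < Int_part y)%Z) by (apply lt_IZR; lra).
  exists (Z.to_nat (Int_part y)); rewrite INR_IZR_INZ, Z2Nat.id by lia; lra.
Qed.

(* If [g] is at distance [dl < 1/8] from the nearest integer, the multiple
   [h = floor (1/(4 dl))] is at distance [h dl] in [(1/4 - dl, 1/4]]. *)
Lemma multiple_off_integers (g eps : R) : 0 < eps ->
  (forall n : Z, Rabs (g - IZR n) > eps) ->
  (forall n : Z, Rabs (g - IZR n) <> 1/2) ->
  exists (h : nat) (n : Z), (1 <= h)%nat /\ INR h <= Rmax 1 (1/(4*eps)) /\
    1/8 <= Rabs (INR h * g - IZR n) < 1/2.
Proof.
  intros Heps Hfar Hhalf.
  destruct (nearest_integer g) as [n0 Hn0].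
  set (dl := Rabs (g - IZR n0)) in *.
  assert (Hdl : eps < dl < 1/2).
  { split; [apply Hfar|].
    destruct (Rle_lt_or_eq_dec _ _ Hn0) as [Hlt|Heq]; [exact Hlt|now destruct (Hhalf n0)]. }
  destruct (Rle_or_lt (1/8) dl) as [Hbig|Hsmall].
  { exists 1%nat, n0; split; [lia|split; [apply Rmax_l|]].
    rewrite Rmult_1_l; fold dl; lra. }
  assert (Hy : 2 < 1/(4*dl)).
  { apply (Rmult_lt_reg_r (4*dl)); [lra|]; field_simplify; lra. }
  destruct (nat_floor (1/(4*dl)) ltac:(lra)) as [h Hh].
  exists h, (Z.of_nat h * n0)%Z.
  assert (Hh1 : (1 <= h)%nat) by (apply INR_le; simpl; lra).
  split; [exact Hh1|split].
  - eapply Rle_trans; [|apply Rmax_r].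
    apply Rle_trans with (1/(4*dl)); [lra|].
    apply Rmult_le_compat_l; [lra|]; apply Rinv_le_contravar; lra.
  - rewrite mult_IZR, <- INR_IZR_INZ, <- Rmult_minus_distr_l, Rabs_mult,
      (Rabs_right (INR h)) by (apply Rle_ge, pos_INR).
    fold dl.
    assert (E : 1/(4*dl) * dl = 1/4) by (field; lra).
    split; nra.
Qed.

Definition irrational (phi : R) : Prop :=
  forall (p : Z) (q : nat), (1 <= q)%nat -> INR q * phi <> IZR p.

Lemma badly_approximable_multiples (phi : R) : badly_approximable phi ->
  exists c : R, 0 < c /\ forall (k : nat) (n : Z), (1 <= k)%nat ->
    Rabs (INR k * phi - IZR n) > c / INR k.
Proof.
  intros [c [Hc Hbad]]; exists c; split; [exact Hc|]; intros k n Hk.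
  specialize (Hbad n k Hk).
  assert (Hk0 : 0 < INR k) by (apply lt_0_INR; lia).
  replace (INR k * phi - IZR n) with (INR k * (phi - IZR n / INR k)) by (field; lra).
  rewrite Rabs_mult, (Rabs_right (INR k)) by lra.
  replace (c / INR k) with (INR k * (c / INR k ^ 2)) by (field; lra).
  apply Rmult_lt_compat_l; lra.
Qed.

Lemma badly_approximable_irrational (phi : R) : badly_approximable phi -> irrational phi.
Proof.
  intros Hbad p q Hq E; destruct (badly_approximable_multiples phi Hbad) as [c [Hc Hmul]].
  specialize (Hmul q p Hq); rewrite E, Rminus_diag, Rabs_R0 in Hmul.
  assert (0 < c / INR q) by (apply Rdiv_lt_0_compat; [lra|apply lt_0_INR; lia]).
  lra.
Qed.

Lemma irrational_int_multiple (phi : R) (q p : Z) :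
  irrational phi -> q <> 0%Z -> IZR q * phi <> IZR p.
Proof.
  intros Hirr [Hneg|Hpos]%Z.lt_gt_cases E.
  - apply (Hirr (- p)%Z (Z.to_nat (- q))); [lia|].
    rewrite INR_IZR_INZ, Z2Nat.id, !opp_IZR by lia; lra.
  - apply (Hirr p (Z.to_nat q)); [lia|].
    now rewrite INR_IZR_INZ, Z2Nat.id by lia.
Qed.

Lemma irrational_multiple_not_half (phi : R) (k : nat) (n : Z) :
  irrational phi -> (1 <= k)%nat -> Rabs (INR k * phi - IZR n) <> 1/2.
Proof.
  intros Hirr Hk E; unfold Rabs in E; destruct (Rcase_abs _).
  - apply (Hirr (2 * n - 1)%Z (2 * k)%nat); [lia|].
    rewrite minus_IZR, mult_IZR, mult_INR; simpl; lra.
  - apply (Hirr (2 * n + 1)%Z (2 * k)%nat); [lia|].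
    rewrite plus_IZR, mult_IZR, mult_INR; simpl; lra.
Qed.

Lemma badly_approximable_multiple_off_integers (phi : R) : badly_approximable phi ->
  exists D : nat, forall k : nat, (1 <= k)%nat ->
    exists (h : nat) (n : Z), (1 <= h <= D * k)%nat /\
      1/8 <= Rabs (INR h * (INR k * phi) - IZR n) < 1/2.
Proof.
  intros Hbad.
  destruct (badly_approximable_multiples phi Hbad) as [c [Hc Hfar]].
  destruct (INR_unbounded (1/(4*c))) as [D HD].
  exists (S D); intros k Hk.
  assert (Hk1 : 1 <= INR k) by (apply (le_INR 1 k Hk)).
  destruct (multiple_off_integers (INR k * phi) (c / INR k)) as (h & n & Hh & HhR & Hs).
  - apply Rdiv_lt_0_compat; lra.
  - intros n; apply Hfar, Hk.
  - intros n; apply irrational_multiple_not_half; [apply badly_approximable_irrational|]; assumption.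
  - exists h, n; split; [split; [exact Hh|]|exact Hs].
    apply INR_le; eapply Rle_trans; [exact HhR|]; rewrite mult_INR, S_INR.
    pose proof (pos_INR D); apply Rmax_lub; [nra|].
    replace (1 / (4 * (c / INR k))) with (1/(4*c) * INR k) by (field; lra).
    nra.
Qed.

Lemma orbit_closed_form (x0 phi : R) (k i : nat) :
  orbit x0 phi k i = mod1 (x0 + INR i * (INR k * phi)).
Proof.
  induction i as [|i IH]; simpl orbit.
  - unfold mod1; f_equal; simpl; ring.
  - rewrite IH; unfold mod1; rewrite frac_part_plus_frac, S_INR; f_equal; ring.
Qed.

Lemma orbit_injective (x0 phi : R) (k : nat) :
  irrational phi -> (1 <= k)%nat -> Injective (orbit x0 phi k).
Proof.
  intros Hirr Hk i i' E; rewrite !orbit_closed_form in E.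
  destruct (frac_part_eq_diff_integer _ _ E) as [z Hz].
  destruct (Nat.eq_dec i i') as [Heq|Hne]; [exact Heq|exfalso].
  apply (irrational_int_multiple phi ((Z.of_nat i - Z.of_nat i') * Z.of_nat k) z Hirr); [nia|].
  rewrite mult_IZR, minus_IZR, <- !INR_IZR_INZ; lra.
Qed.

Lemma distinct_choices (f : nat -> nat -> nat) (J N : nat) (Q : nat -> Prop) :
  (forall m j m' j', (j < J)%nat -> (j' < J)%nat -> f m j = f m' j' -> m = m') ->
  (forall m, (m < N)%nat -> exists j, (j < J)%nat /\ Q (f m j)) ->
  exists l, NoDup l /\ length l = N /\
    forall i, In i l -> exists m j, (m < N)%nat /\ (j < J)%nat /\ i = f m j /\ Q i.
Proof.
  intros Hinj; induction N as [|N IH]; intros Hchoice.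
  - exists nil; repeat split; [constructor|intros i []].
  - destruct IH as [l [Hnd [Hlen Hl]]]; [intros m Hm; apply Hchoice; lia|].
    destruct (Hchoice N ltac:(lia)) as [j [Hj HQ]].
    exists (f N j :: l); split; [|split; [simpl; lia|]].
    + constructor; [|exact Hnd]; intros Hin.
      destruct (Hl _ Hin) as [m [j' [Hm [Hj' [E _]]]]].
      apply Hinj in E; [lia|exact Hj|exact Hj'].
    + intros i [<-|Hin]; [exists N, j; repeat split; auto|].
      destruct (Hl _ Hin) as [m [j' [Hm [Hj' [E Hq]]]]].
      exists m, j'; repeat split; auto.
Qed.

(* Writing [m = h b + o] with [o < h], the indices for [j < 6] form a progression
   of step [h] inside the [b]-th run of [6 h] consecutive indices. *)
Definition block_index (h m j : nat) : nat := 1 + m mod h + h * (6 * (m / h) + j).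

Lemma block_index_inj (h m j m' j' : nat) : (1 <= h)%nat -> (j < 6)%nat -> (j' < 6)%nat ->
  block_index h m j = block_index h m' j' -> m = m'.
Proof.
  unfold block_index; intros Hh Hj Hj' E.
  assert (Hmod : forall m, (m mod h < h)%nat) by (intros; apply Nat.mod_upper_bound; lia).
  set (A := (m mod h + h * (6 * (m / h) + j))%nat).
  assert (Hq : (6 * (m / h) + j = 6 * (m' / h) + j')%nat).
  { rewrite (Nat.div_unique A h (6 * (m / h) + j) (m mod h)) by (apply Hmod || (unfold A; lia)).
    now rewrite (Nat.div_unique A h (6 * (m' / h) + j') (m' mod h)) by (apply Hmod || (unfold A; lia)). }
  assert (Hr : (m mod h = m' mod h)%nat).
  { rewrite (Nat.mod_unique A h (6 * (m / h) + j) (m mod h)) by (apply Hmod || (unfold A; lia)).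
    now rewrite (Nat.mod_unique A h (6 * (m' / h) + j') (m' mod h)) by (apply Hmod || (unfold A; lia)). }
  assert (Hdiv : (m / h = m' / h)%nat) by lia.
  rewrite (Nat.div_mod_eq m h), (Nat.div_mod_eq m' h), Hdiv, Hr; reflexivity.
Qed.

Lemma lower_half_indices (z g : R) (h B : nat) (n : Z) : (1 <= h)%nat ->
  1/8 <= Rabs (INR h * g - IZR n) < 1/2 ->
  exists l, NoDup l /\ length l = (h * B)%nat /\
    forall i, In i l -> (1 <= i <= 6 * (h * B))%nat /\ 0 < frac_part (z + INR i * g) < 1/2.
Proof.
  intros Hh Hs.
  destruct (distinct_choices (block_index h) 6 (h * B)
              (fun i => 0 < frac_part (z + INR i * g) < 1/2)) as [l [Hnd [Hlen Hl]]].
  - intros m j m' j' Hj Hj'; apply block_index_inj; assumption.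
  - intros m _.
    destruct (lower_half_within_six_steps (z + INR (block_index h m 0) * g) _ n Hs)
      as [j [Hj Hfr]].
    exists j; split; [exact Hj|].
    assert (E : block_index h m j = (block_index h m 0 + h * j)%nat) by (unfold block_index; lia).
    rewrite E, plus_INR, mult_INR.
    replace (z + (INR (block_index h m 0) + INR h * INR j) * g)
      with (z + INR (block_index h m 0) * g + INR j * (IZR n + (INR h * g - IZR n))) by ring.
    exact Hfr.
  - exists l; split; [exact Hnd|split; [exact Hlen|]].
    intros i Hi; destruct (Hl i Hi) as (m & j & Hm & Hj & -> & Hfr); split; [|exact Hfr].
    assert (Hr : (m mod h < h)%nat) by (apply Nat.mod_upper_bound; lia).
    assert (Hq : (m / h < B)%nat) by (apply Nat.Div0.div_lt_upper_bound; exact Hm).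
    unfold block_index; nia.
Qed.

Theorem theorem3p4 (phi : R) (P : R -> Prop) (L : R) :
  badly_approximable phi ->
  is_arc P L -> 1/2 <= L ->
  exists (r : R) (d : nat), 0 < r /\
    forall x0 : R,
      exists K : nat, forall k : nat, (K <= k)%nat ->
        exists l : list R,
          NoDup l /\ r * INR k <= INR (length l) /\
          forall y, In y l ->
            exists i : nat, (1 <= i <= d * k)%nat /\
              y = orbit x0 phi k i /\ P y.
Proof.
  intros Hbad [_ [a [Harc _]]] HL.
  pose proof (badly_approximable_irrational phi Hbad) as Hirr.
  destruct (badly_approximable_multiple_off_integers phi Hbad) as [D HD].
  exists 1, (6 + 6 * D)%nat; split; [lra|]; intros x0; exists 1%nat; intros k Hk.
  destruct (HD k Hk) as (h & n & [Hh HhD] & Hs).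
  (* [h B > k] indices, all at most [6 h B <= 6 (k + h)]. *)
  set (B := S (k / h)).
  destruct (lower_half_indices (x0 - a) (INR k * phi) h B n Hh Hs) as (l & Hnd & Hlen & Hl).
  exists (map (orbit x0 phi k) l); split; [|split].
  - apply Injective_map_NoDup; [apply orbit_injective|]; assumption.
  - rewrite length_map, Hlen, Rmult_1_l; apply le_INR, Nat.lt_le_incl, Nat.mul_succ_div_gt; lia.
  - intros y [i [<- Hi]]%in_map_iff; exists i.
    destruct (Hl i Hi) as [Hrange Hfr]; split; [|split; [reflexivity|]].
    + pose proof (Nat.Div0.mul_div_le k h); unfold B in Hrange; nia.
    + rewrite orbit_closed_form; apply Harc; unfold mod1.
      replace (x0 + INR i * (INR k * phi) - a) with (x0 - a + INR i * (INR k * phi)) by ring.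
      lra.
Qed.
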